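(* Let $n\in\mathbb N$, $\delta>0$, and let $d$ be a metric on $\mathbb R^n$ induced by a norm. Let $w_1,\dots,w_N$ be contractions on $(\mathbb R^n,d)$ with contractivity factors $\lambda_i\in[0,1)$, let $\lambda_{max}=\max_i\lambda_i$, and let $A_\infty$ be the attractor of the hyperbolic IFS $\{\mathbb R^n;w_1,\dots,w_N;q_1,\dots,q_N\}$ with constant probabilities $q_i\in(0,1]$, $\sum_iq_i=1$. Let $\{\mathcal D^n(\delta);\tilde w_1,\dots,\tilde w_N;p_1,\dots,p_N\}$ be a DIFS in which $\tilde w_i$ is the $\delta$-roundoff of $w_i$. Then, independently of the values of the probabilities $p_i(\cdot)$ and $q_i$, for every positive recurrent communication class $\mathcal A_k^+$ of the Markov chain associated with the DIFS, the Hausdorff distance (induced by $d$) satisfies $$h(\mathcal A_k^+,A_\infty)\le\theta(1-\lambda_{max})^{-1}.$$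
   Context: For $m\in\mathbb Z^n$, $C_\delta(m)=\prod_{j=1}^n[(m_j-\tfrac12)\delta,(m_j+\tfrac12)\delta)$; $\mathcal D^n(\delta)=\{\delta m:m\in\mathbb Z^n\}\subset\mathbb R^n$. The $\delta$-roundoff of $x\in\mathbb R^n$ is $\tilde x=\delta m$ where $x\in C_\delta(m)$; the $\delta$-roundoff of $w:\mathbb R^n\to\mathbb R^n$ is $\tilde w(\tilde x)=\widetilde{w(\tilde x)}$ on $\mathcal D^n(\delta)$. $\theta:=\tfrac12\operatorname{diam}_d(C_\delta(0))$. The attractor of a hyperbolic IFS is the unique nonempty compact $A_\infty\subset\mathbb R^n$ with $A_\infty=\bigcup_i w_i(A_\infty)$. A DIFS $\{S;\tilde w_1,\dots,\tilde w_N;p_1,\dots,p_N\}$ consists of $S\subset\mathcal D^n(\delta)$, maps $\tilde w_i:S\to S$ and functions $p_i:S\to(0,1]$ with $\sum_ip_i(\tilde x)=1$; its associated Markov chain has transition probabilities $P(\tilde x,\tilde y)=\sum_ip_i(\tilde x)\mathbf 1_{\{\tilde y\}}(\tilde w_i(\tilde x))$. State $\tilde y$ is accessible from $\tilde x$ if $P^k(\tilde x,\tilde y)>0$ for some $k\ge1$; two states communicate if each is accessible from the other; a communication class is a maximal nonempty set of states any two of which (not necessarily distinct) communicate. A state is recurrent if the chain started there returns to it in finitely many steps a.s., and positive recurrent if moreover the expected return time is finite; a positive recurrent communication class is a communication class of positive recurrent states. *)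

From HB Require Import structures.
From mathcomp Require Import all_boot all_order all_algebra.
From mathcomp Require Import all_classical all_reals all_analysis.
Set Implicit Arguments. Unset Strict Implicit. Unset Printing Implicit Defensive.
Import Order.TTheory GRing.Theory Num.Theory.
Import numFieldNormedType.Exports.
Local Open Scope classical_set_scope.
Local Open Scope ring_scope.

Section Defs.
Variable R : realType.
Variable n : nat.

Definition is_norm (nrm : 'rV[R]_n -> R) : Prop :=
  [/\ forall x, nrm x = 0 -> x = 0,
      forall (a : R) x, nrm (a *: x) = `|a| * nrm x &
      forall x y, nrm (x + y) <= nrm x + nrm y].

Definition dist (nrm : 'rV[R]_n -> R) (x y : 'rV[R]_n) : R := nrm (x - y).

Definition ifs_contraction (nrm : 'rV[R]_n -> R) (w : 'rV[R]_n -> 'rV[R]_n) (lam : R) :=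
  0 <= lam /\ lam < 1 /\ forall x y, dist nrm (w x) (w y) <= lam * dist nrm x y.

Definition latpt (delta : R) (m : 'rV[int]_n) : 'rV[R]_n :=
  delta *: map_mx (fun z : int => z%:~R) m.

Definition cell (delta : R) (m : 'rV[int]_n) : set 'rV[R]_n :=
  [set x | forall j, (m 0 j)%:~R * delta - delta / 2 <= x 0 j /\
                      x 0 j < (m 0 j)%:~R * delta + delta / 2].

(* the lattice index m of the cell containing x (so that x \in cell delta m) *)
Definition round_idx (delta : R) (x : 'rV[R]_n) : 'rV[int]_n :=
  \row_j Num.floor (x 0 j / delta + 2^-1).

(* delta-roundoff of a map w, on lattice indices: w~(delta m) = delta (round_idx (w (delta m))) *)
Definition roundoff_map (delta : R) (w : 'rV[R]_n -> 'rV[R]_n) (m : 'rV[int]_n)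
  : 'rV[int]_n := round_idx delta (w (latpt delta m)).

Definition theta (nrm : 'rV[R]_n -> R) (delta : R) : R :=
  2^-1 * sup [set r | exists x y, [/\ cell delta 0 x, cell delta 0 y & r = dist nrm x y]].

Definition hausdorff (nrm : 'rV[R]_n -> R) (A B : set 'rV[R]_n) : \bar R :=
  maxe (ereal_sup [set ereal_inf [set (dist nrm a b)%:E | b in B] | a in A])
       (ereal_sup [set ereal_inf [set (dist nrm a b)%:E | a in A] | b in B]).

Definition is_attractor (N : nat) (w : 'I_N -> 'rV[R]_n -> 'rV[R]_n)
  (A : set 'rV[R]_n) : Prop :=
  A !=set0 /\ compact A /\ A = \bigcup_(i in [set: 'I_N]) (w i @` A).

End Defs.

Section Chain.
Variable R : realType.
Variables (S : eqType) (N : nat).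
Variable W : 'I_N -> S -> S.
Variable p : 'I_N -> S -> R.

Definition traj (x : S) (s : seq 'I_N) : seq S := scanl (fun y i => W i y) x s.

Fixpoint pprob (x : S) (s : seq 'I_N) : R :=
  match s with [::] => 1 | i :: s' => p i x * pprob (W i x) s' end.

Definition Pk (k : nat) (x y : S) : R :=
  \sum_(s : k.-tuple 'I_N) pprob x s * ((last x (traj x s) == y) : nat)%:R.

Definition accessible (x y : S) : Prop := exists2 k, (1 <= k)%N & 0 < Pk k x y.
Definition communicate (x y : S) : Prop := accessible x y /\ accessible y x.

Definition communication_class (C : set S) : Prop :=
  C !=set0 /\ (forall x y, C x -> C y -> communicate x y) /\
  (forall D : set S, C `<=` D -> (forall x y, D x -> D y -> communicate x y) -> D = C).

Definition first_return (k : nat) (x : S) : R :=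
  \sum_(s : k.-tuple 'I_N)
     pprob x s * ((last x (traj x s) == x) && (x \notin take k.-1 (traj x s)) : nat)%:R.

Definition recurrent (x : S) : Prop :=
  (fun m => \sum_(1 <= k < m) first_return k x) @ \oo --> (1 : R).

Definition pos_recurrent (x : S) : Prop :=
  recurrent x /\ cvg ((fun m => \sum_(1 <= k < m) (k%:R * first_return k x)) @ \oo).

Definition pos_recurrent_class (C : set S) : Prop :=
  communication_class C /\ forall x, C x -> pos_recurrent x.

End Chain.

From HB Require Import structures.
From mathcomp Require Import all_boot all_order all_algebra.
From mathcomp Require Import all_classical all_reals all_analysis.
From mathcomp Require Import ring lra.
Import Order.TTheory GRing.Theory Num.Theory.
Import numFieldNormedType.Exports.
Set Implicit Arguments. Unset Strict Implicit. Unset Printing Implicit Defensive.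
Local Open Scope classical_set_scope.
Local Open Scope ring_scope.

(* A positive recurrent class is closed under every rounded map: if a step
   [x -> w~_i x] led to a state from which [x] is unreachable, the chain would
   return to [x] with probability at most [1 - p_i(x) < 1].  One rounded step
   lands within [theta] of the exact image, so with [T = theta / (1 - lambda_max)]
   the excess [d - T] of the distance between a lattice orbit and an exact orbit
   shrinks by [lambda_max] per step.  Every state of the class lies on a cycle,
   which, run against attractor points, yields attractor points within
   [T + eps]; conversely, every attractor point is the image of an attractor
   point under arbitrarily long compositions, which the class can follow from
   any of its states. *)

Lemma sum_tupleS (V : nmodType) (I : finType) k (G : seq I -> V) :
  \sum_(t : k.+1.-tuple I) G t = \sum_(i : I) \sum_(t : k.-tuple I) G (i :: t).
Proof.
rewrite pair_big /= (reindex (fun q : I * k.-tuple I => [tuple of q.1 :: q.2])) //=.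
exists (fun t : k.+1.-tuple I => (thead t, [tuple of behead t])).
  by move=> [i t] _ /=; congr pair; apply: val_inj.
by move=> [[|a l] //= ?] _; apply: val_inj.
Qed.

Lemma bool_mix_le1 (R : numDomainType) (b : bool) (h : R) :
  h <= 1 -> b%:R + (~~ b)%:R * h <= 1.
Proof. by case: b => /=; rewrite ?mulr1n ?mulr0n ?mul0r ?addr0 ?add0r ?mul1r. Qed.

Section MarkovChain.
Variables (R : realType) (S : eqType) (N : nat).
Variables (W : 'I_N -> S -> S) (p : 'I_N -> S -> R).

Definition run (x : S) (s : seq 'I_N) : S := foldl (fun y i => W i y) x s.

Lemma last_traj x s : last x (traj W x s) = run x s.
Proof. by elim: s x => //= i s IH x; rewrite IH. Qed.

Lemma run_cat x s t : run x (s ++ t) = run (run x s) t.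
Proof. exact: foldl_cat. Qed.

Lemma run_stable (P : set S) : (forall i x, P x -> P (W i x)) ->
  forall s x, P x -> P (run x s).
Proof. by move=> PW; elim=> [|i s IH] x Px //=; apply/IH/PW. Qed.

Hypothesis p_gt0 : forall i x, 0 < p i x.

Lemma pprob_gt0 x s : 0 < pprob W p x s.
Proof. by elim: s x => //= i s IH x; rewrite mulr_gt0. Qed.

Lemma Pk_gt0P k x y : 0 < Pk W p k x y <-> exists s : k.-tuple 'I_N, run x s = y.
Proof.
split=> [Pk_gt0|[s0 s0y]].
  apply: contrapT => no_s; move: Pk_gt0; rewrite /Pk big1 ?ltxx // => s _.
  case: eqP => [sy|_]; last by rewrite mulr0.
  by case: no_s; exists s; rewrite -last_traj.
rewrite /Pk (bigD1 s0) //= last_traj s0y eqxx mulr1 ltr_pwDl ?pprob_gt0 //.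
by rewrite sumr_ge0 // => s _; rewrite mulr_ge0 ?ler0n // ltW // pprob_gt0.
Qed.

Lemma accessibleP x y :
  accessible W p x y <-> exists2 s : seq 'I_N, (0 < size s)%N & run x s = y.
Proof.
split=> [[k k_gt0 /Pk_gt0P [s sy]]|[s s_gt0 sy]]; first by exists s; rewrite ?size_tuple.
by exists (size s) => //; apply/Pk_gt0P; exists (in_tuple s).
Qed.

Lemma accessible_trans x y z :
  accessible W p x y -> accessible W p y z -> accessible W p x z.
Proof.
move=> /accessibleP [s s_gt0 sy] /accessibleP [t _ tz]; apply/accessibleP.
by exists (s ++ t); rewrite ?size_cat ?addn_gt0 ?s_gt0 // run_cat sy.
Qed.

Lemma accessible_step x i : accessible W p x (W i x).
Proof. by apply/accessibleP; exists [:: i]. Qed.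

Hypothesis p_sum1 : forall x, \sum_(i < N) p i x = 1.

Lemma p_le1 i x : p i x <= 1.
Proof.
by rewrite -(p_sum1 x) (bigD1 i) //= lerDl sumr_ge0 // => j _; rewrite ltW.
Qed.

Section FirstHit.
Variable x : S.

(* [first_return] with an arbitrary starting state: [first_return k x] is
   [first_hit k x]. *)
Definition first_hit (k : nat) (y : S) : R :=
  \sum_(s : k.-tuple 'I_N) pprob W p y s *
    ((last y (traj W y s) == x) && (x \notin take k.-1 (traj W y s)) : nat)%:R.

Definition hit_before (m : nat) (y : S) : R := \sum_(1 <= k < m) first_hit k y.

Lemma first_hit1 y : first_hit 1 y = \sum_(i < N) p i y * (W i y == x)%:R.
Proof.
rewrite /first_hit (sum_tupleS _ (fun s => pprob W p y s *
  ((last y (traj W y s) == x) && (x \notin take 0 (traj W y s)) : nat)%:R)).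
apply: eq_bigr => i _; rewrite (big_pred1 [tuple]) => [|t].
  by rewrite /= mulr1 andbT.
by apply/esym/eqP/val_inj; case: t => -[].
Qed.

Lemma first_hitS k y : (0 < k)%N ->
  first_hit k.+1 y = \sum_(i < N) p i y * ((W i y != x)%:R * first_hit k (W i y)).
Proof.
case: k => // k _; rewrite /first_hit (sum_tupleS _ (fun s => pprob W p y s *
  ((last y (traj W y s) == x) && (x \notin take k.+1 (traj W y s)) : nat)%:R)).
apply: eq_bigr => i _.
rewrite !big_distrr; apply: eq_bigr => t _ /=.
rewrite in_cons negb_or [x == W i y]eq_sym.
by case: (W i y == x); rewrite /= ?andbF ?mul0r ?mulr0 ?mul1r ?mulrA.
Qed.

Lemma hit_before_first_step m y : hit_before m.+2 y =
  \sum_(i < N) p i y * ((W i y == x)%:R + (W i y != x)%:R * hit_before m.+1 (W i y)).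
Proof.
rewrite /hit_before big_nat_recl // first_hit1 big_add1 /=.
rewrite (eq_big_nat _ _ (fun k _ => first_hitS y _)) //.
rewrite exchange_big -big_split /=; apply: eq_bigr => i _.
by rewrite mulrDr -mulr_sumr -mulr_sumr big_add1.
Qed.

Lemma hit_before_le1 m y : hit_before m y <= 1.
Proof.
elim: m y => [|[|m] IH] y; try by rewrite /hit_before big_geq.
rewrite hit_before_first_step -[leRHS](p_sum1 y) ler_sum // => i _.
by rewrite ler_piMr ?(ltW (p_gt0 _ _)) ?bool_mix_le1.
Qed.

Lemma first_hit_inaccessible k y : (0 < k)%N -> ~ accessible W p y x ->
  first_hit k y = 0.
Proof.
move=> k_gt0 y_x; rewrite /first_hit big1 // => s _.
case: andP => [[/eqP sx _]|]; last by rewrite mulr0.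
by case: y_x; apply/accessibleP; exists s; rewrite ?size_tuple // -last_traj.
Qed.

(* Leaving [x] through [W i] to a state from which [x] is unreachable has
   probability [p i x], so the return probability is at most [1 - p i x]. *)
Lemma hit_before_le_escape i m : W i x != x -> ~ accessible W p (W i x) x ->
  hit_before m x <= 1 - p i x.
Proof.
move=> Wix_neq Wix_x.
case: m => [|[|m]]; try by rewrite /hit_before big_geq // subr_ge0 p_le1.
rewrite hit_before_first_step -[X in _ <= X - _](p_sum1 x).
rewrite (bigD1 i) //= [X in _ <= X - _](bigD1 i) //=.
have -> : hit_before m.+1 (W i x) = 0.
  by rewrite /hit_before big_nat big1 // => k /andP[k_gt0 _]; rewrite first_hit_inaccessible.
rewrite (negbTE Wix_neq) mulr0n mulr1n add0r mul1r mulr0 add0r addrAC subrr add0r.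
apply: ler_sum => j _.
by rewrite ler_piMr ?(ltW (p_gt0 _ _)) ?bool_mix_le1 ?hit_before_le1.
Qed.
End FirstHit.

Lemma recurrent_accessible_back x i : recurrent W p x -> accessible W p (W i x) x.
Proof.
move=> x_rec; have [Wix_eq|Wix_neq] := eqVneq (W i x) x.
  by have := accessible_step x i; rewrite Wix_eq.
apply: contrapT => Wix_x.
have : lim (hit_before x m x @[m --> \oo]) <= 1 - p i x.
  apply: limr_le; first by apply/cvg_ex; exists 1.
  by apply: nearW => m; apply: hit_before_le_escape.
by rewrite (cvg_lim _ x_rec) //; have := p_gt0 i x; lra.
Qed.

Lemma communication_class_closed C : communication_class W p C ->
  (forall x, C x -> recurrent W p x) -> forall i x, C x -> C (W i x).
Proof.
move=> [_ [C_comm C_max]] C_rec i x Cx.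
have x_Wix := accessible_step x i.
have Wix_x := recurrent_accessible_back i (C_rec x Cx).
suff <- : C `|` [set W i x] = C by right.
apply: C_max => [u Cu|u v [Cu|->] [Cv|->]]; first by left.
- exact: C_comm.
- split; first exact: accessible_trans (C_comm u x Cu Cx).1 x_Wix.
  exact: accessible_trans Wix_x (C_comm x u Cx Cu).1.
- split; first exact: accessible_trans Wix_x (C_comm x v Cx Cv).1.
  exact: accessible_trans (C_comm v x Cv Cx).1 x_Wix.
- by split; exact: accessible_trans Wix_x x_Wix.
Qed.

End MarkovChain.

Section NormGeometry.
Variables (R : realType) (n : nat) (nrm : 'rV[R]_n -> R).
Hypothesis nrmP : is_norm nrm.

Lemma nrmZ a x : nrm (a *: x) = `|a| * nrm x.
Proof. by case: nrmP. Qed.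

Lemma nrmD x y : nrm (x + y) <= nrm x + nrm y.
Proof. by case: nrmP. Qed.

Lemma nrm0 : nrm 0 = 0.
Proof. by rewrite -(scale0r 0) nrmZ normr0 mul0r. Qed.

Lemma nrmN x : nrm (- x) = nrm x.
Proof. by rewrite -scaleN1r nrmZ normrN normr1 mul1r. Qed.

Lemma nrm_ge0 x : 0 <= nrm x.
Proof. by have := nrmD x (- x); rewrite subrr nrm0 nrmN; lra. Qed.

Lemma nrm_sum (I : finType) (F : I -> 'rV[R]_n) : nrm (\sum_i F i) <= \sum_i nrm (F i).
Proof.
elim/big_ind2: _ => [|x1 x2 y1 y2 le1 le2|//]; first by rewrite nrm0.
exact: le_trans (nrmD _ _) (lerD le1 le2).
Qed.

Lemma nrm_le_coord x : nrm x <= \sum_j `|x 0 j| * nrm 'e_j.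
Proof.
rewrite {1}(row_sum_delta x); apply: le_trans (nrm_sum _) _.
by apply: ler_sum => j _; rewrite nrmZ.
Qed.

Lemma dist_triangle x y z : dist nrm x z <= dist nrm x y + dist nrm y z.
Proof. by rewrite /dist (_ : x - z = (x - y) + (y - z)) ?nrmD // addrA subrK. Qed.

Lemma distC x y : dist nrm x y = dist nrm y x.
Proof. by rewrite /dist -nrmN opprB. Qed.

Lemma compact_nrm_bounded (A : set 'rV[R]_n) : compact A ->
  exists M, forall a, A a -> nrm a <= M.
Proof.
move=> A_cpt.
have coord_bnd j : exists Mj, forall a, A a -> `|a 0 j| <= Mj.
  have : compact [set a 0 j | a in A].
    apply: continuous_compact => //; apply: continuous_subspaceT.
    exact: coord_continuous.
  move=> /compact_bounded [M [_ M_bnd]]; exists (M + 1) => a Aa.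
  by apply: M_bnd; [lra | exists a].
have [Mc Mc_bnd] := choice coord_bnd.
exists (\sum_j Mc j * nrm 'e_j) => a Aa.
apply: le_trans (nrm_le_coord a) _; apply: ler_sum => j _.
by rewrite ler_wpM2r ?nrm_ge0 ?Mc_bnd.
Qed.

Variable delta : R.
Hypothesis delta_gt0 : 0 < delta.

Definition cell0_dists : set R :=
  [set r | exists x y : 'rV[R]_n, [/\ cell delta 0 x, cell delta 0 y & r = dist nrm x y]].

Lemma theta_cell0_dists : theta nrm delta = 2^-1 * sup cell0_dists.
Proof. by []. Qed.

Lemma cell0P (x : 'rV[R]_n) : cell delta 0 x <-> forall j, - (delta / 2) <= x 0 j < delta / 2.
Proof.
rewrite /cell; split=> x_in j; have := x_in j; rewrite mxE mul0r sub0r add0r.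
  by case=> -> ->.
by case/andP.
Qed.

Lemma cell0_0 : cell delta 0 (0 : 'rV[R]_n).
Proof.
apply/cell0P => j; have half_gt0 : 0 < delta / 2 by rewrite divr_gt0.
by rewrite mxE oppr_le0 half_gt0 ltW.
Qed.

Lemma cell0_dists0 : cell0_dists 0.
Proof. by exists 0, 0; split; rewrite ?/dist ?subrr ?nrm0 //; exact: cell0_0. Qed.

Lemma has_sup_cell0_dists : has_sup cell0_dists.
Proof.
split; first by exists 0; exact: cell0_dists0.
exists (delta * \sum_j nrm 'e_j) => _ [x [y [/cell0P x_in /cell0P y_in ->]]].
apply: le_trans (nrm_le_coord _) _; rewrite mulr_sumr ler_sum // => j _.
rewrite ler_wpM2r ?nrm_ge0 // !mxE.
by have := x_in j; have := y_in j; move=> /andP[? ?] /andP[? ?]; rewrite ler_norml; lra.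
Qed.

Lemma theta_ge0 : 0 <= theta nrm delta.
Proof.
rewrite theta_cell0_dists mulr_ge0 //.
exact: (sup_upper_bound has_sup_cell0_dists cell0_dists0).
Qed.

(* The cell is half-open, so [-y] need not lie in it, but [t y] and [-t y] do
   for [t < 1]; the choice [2 t nrm y = nrm y + theta] puts two points of the
   cell farther apart than [2 theta]. *)
Lemma nrm_le_theta (y : 'rV[R]_n) : (forall j, - (delta / 2) <= y 0 j < delta / 2) ->
  nrm y <= theta nrm delta.
Proof.
move=> y_in; have theta0 := theta_ge0; rewrite leNgt; apply/negP => theta_lt.
set a := nrm y in theta_lt; set b := theta nrm delta in theta_lt theta0.
have a_gt0 : 0 < a by apply: le_lt_trans theta_lt.
pose t := (a + b) / (2 * a).
have t_ge0 : 0 <= t by rewrite divr_ge0 ?mulr_ge0 //; lra.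
have t_lt1 : t < 1 by rewrite ltr_pdivrMr ?mulr_gt0 // mul1r; lra.
have ta : t * a = (a + b) / 2 by rewrite /t; field; rewrite gt_eqF.
have ty_in : cell delta 0 (t *: y).
  by apply/cell0P => j; rewrite mxE; case/andP: (y_in j) => ? ?; apply/andP; split; nra.
have Nty_in : cell delta 0 (- (t *: y)).
  by apply/cell0P => j; rewrite !mxE; case/andP: (y_in j) => ? ?; apply/andP; split; nra.
have := sup_upper_bound has_sup_cell0_dists (ex_intro _ _ (ex_intro _ _
  (And3 ty_in Nty_in erefl))).
rewrite /dist opprK -scalerDl nrmZ ger0_norm ?addr_ge0 // mulrDl ta.
have -> : sup cell0_dists = 2 * b by rewrite /b theta_cell0_dists mulrA mulfV ?mul1r.
lra.
Qed.

Lemma round_coord (x : 'rV[R]_n) j :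
  - (delta / 2) <= (x - latpt delta (round_idx delta x)) 0 j < delta / 2.
Proof.
rewrite !mxE; have := floor_itv (x 0 j / delta + 2^-1).
set f := Num.floor _; rewrite intrD => /andP[f_le lt_f1].
have -> : x 0 j = (x 0 j / delta) * delta by rewrite divfK // gt_eqF.
set u := x 0 j / delta in f_le lt_f1 *; set F := f%:~R in f_le lt_f1 *.
have e1 : 0 <= delta * (u + 2^-1 - F) by rewrite mulr_ge0 ?(ltW delta_gt0) // subr_ge0.
have e2 : 0 < delta * (F + 1 - (u + 2^-1)) by rewrite mulr_gt0 // subr_gt0.
by apply/andP; split; nra.
Qed.

Lemma nrm_round_le_theta (x : 'rV[R]_n) :
  nrm (x - latpt delta (round_idx delta x)) <= theta nrm delta.
Proof. exact/nrm_le_theta/round_coord. Qed.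

End NormGeometry.

Lemma ereal_inf_le_geometric (R : realType) (U : Type) (B : set U) (f : U -> R)
    (T K L : R) : 0 <= L < 1 ->
  (forall j, exists2 u, B u & f u <= T + L ^+ j * K) ->
  (ereal_inf [set (f u)%:E | u in B] <= T%:E)%E.
Proof.
move=> /andP[L_ge0 L_lt1] near_T; apply/lee_addgt0Pr => e e_gt0.
have [j LjK_lt] : exists j, L ^+ j * K < e.
  have [K_le0|K_gt0] := lerP K 0.
    by exists 0%N; rewrite expr0 mul1r; apply: le_lt_trans K_le0 e_gt0.
  have /cvg_expr/cvgr0_norm_lt/(_ (e / K)) [|j0 _ Lj_lt] : `|L| < 1 by rewrite ger0_norm.
    by rewrite divr_gt0.
  exists j0; have := Lj_lt j0 (leqnn j0).
  by rewrite /= ger0_norm ?exprn_ge0 // ltr_pdivlMr.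
have [u Bu fu_le] := near_T j.
apply: le_trans (ereal_inf_lbound _) _; first by exists u.
by rewrite lee_fin; lra.
Qed.

Lemma max0_le_scale (R : realDomainType) (c x y : R) :
  0 <= c -> x <= c * y -> Num.max 0 x <= c * Num.max 0 y.
Proof.
move=> c_ge0 x_le; rewrite ge_max mulr_ge0 ?le_max ?lexx //=.
by apply: le_trans x_le _; rewrite ler_wpM2l // le_max lexx orbT.
Qed.

Section RoundedIFS.
Variables (R : realType) (n : nat) (nrm : 'rV[R]_n -> R) (delta : R) (N : nat).
Variables (w : 'I_N -> 'rV[R]_n -> 'rV[R]_n) (lam : 'I_N -> R) (A : set 'rV[R]_n).
Hypotheses (nrmP : is_norm nrm) (delta_gt0 : 0 < delta).
Hypothesis w_contr : forall i, ifs_contraction nrm (w i) (lam i).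
Hypothesis A_attr : is_attractor w A.

Let L := \big[Num.max/0]_(i < N) lam i.
Let T := theta nrm delta * (1 - L)^-1.
Let X := @latpt R n delta.
Let Wr := roundoff_map delta \o w.

Lemma lam_max_ge0 : 0 <= L.
Proof. exact: bigmax_ge_id. Qed.

Lemma lam_max_lt1 : L < 1.
Proof. by apply: bigmax_lt => // i _; case: (w_contr i) => _ []. Qed.

Lemma theta_lam_max : theta nrm delta = T * (1 - L).
Proof. by rewrite mulfVK // subr_eq0 gt_eqF // lam_max_lt1. Qed.

(* [T] is the fixed point of [r |-> theta + L r]: one roundoff step adds at most
   [theta] to a distance that the maps shrink by [L], so the excess over [T]
   contracts by [L]. *)
Lemma dist_roundoff_step i m a :
  dist nrm (X (Wr i m)) (w i a) - T <= L * (dist nrm (X m) a - T).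
Proof.
have round_le : dist nrm (X (Wr i m)) (w i (X m)) <= theta nrm delta.
  by rewrite (distC nrmP) /dist; apply: (nrm_round_le_theta nrmP delta_gt0).
have contr_le : dist nrm (w i (X m)) (w i a) <= L * dist nrm (X m) a.
  case: (w_contr i) => _ [_ w_lip]; apply: le_trans (w_lip _ _) _.
  by rewrite ler_wpM2r ?(nrm_ge0 nrmP) ?le_bigmax.
have := dist_triangle nrmP (X (Wr i m)) (w i (X m)) (w i a).
by rewrite theta_lam_max in round_le; nra.
Qed.

Let excess m a := Num.max 0 (dist nrm (X m) a - T).

Lemma excess_run s m a : excess (run Wr m s) (run w a s) <= L ^+ size s * excess m a.
Proof.
elim: s m a => [|i s IH] m a /=; first by rewrite expr0 mul1r.
apply: le_trans (IH _ _) _; rewrite exprSr -mulrA ler_wpM2l ?exprn_ge0 ?lam_max_ge0 //.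
exact: max0_le_scale lam_max_ge0 (dist_roundoff_step i m a).
Qed.

Lemma dist_le_excess m a : dist nrm (X m) a <= T + excess m a.
Proof. by rewrite -lerBlDl le_max lexx orbT. Qed.

Lemma attractor_map i a : A a -> A (w i a).
Proof. by case: A_attr => _ [_ A_eq] Aa; rewrite A_eq; exists i => //; exists a. Qed.

Lemma attractor_run_decomp j b : A b -> exists s a, [/\ size s = j, A a & run w a s = b].
Proof.
elim: j b => [|j IH] b Ab; first by exists [::], b.
case: A_attr => _ [_ A_eq]; move: Ab; rewrite {1}A_eq => -[i _ [b1 Ab1 <-]].
have [s [a [<- Aa <-]]] := IH _ Ab1.
by exists (rcons s i), a; rewrite size_rcons -cats1 run_cat.
Qed.

Lemma inf_dist_cycle_le y s : (0 < size s)%N -> run Wr y s = y ->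
  (ereal_inf [set (dist nrm (X y) b)%:E | b in A] <= T%:E)%E.
Proof.
move=> s_gt0 y_cycle; case: (A_attr) => -[a0 Aa0] _.
have Ls_le : L ^+ size s <= L.
  by rewrite -[leRHS]expr1 ler_wiXn2l ?lam_max_ge0 ?ltW ?lam_max_lt1.
have excess_small j : exists2 b, A b & excess y b <= L ^+ j * excess y a0.
  elim: j => [|j [b Ab b_near]]; first by exists a0; rewrite ?expr0 ?mul1r.
  exists (run w b s); first exact: run_stable attractor_map s b Ab.
  have := excess_run s y b; rewrite y_cycle => /le_trans; apply.
  by rewrite exprS -mulrA ler_pM ?exprn_ge0 ?lam_max_ge0 ?le_max ?lexx.
apply: (ereal_inf_le_geometric (K := excess y a0) (L := L)).
  by rewrite lam_max_ge0 lam_max_lt1.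
move=> j; have [b Ab b_near] := excess_small j.
by exists b => //; apply: le_trans (dist_le_excess y b) _; rewrite lerD2l.
Qed.

Lemma inf_dist_closed_le (C : set 'rV[int]_n) : C !=set0 ->
  (forall i m, C m -> C (Wr i m)) -> forall b, A b ->
  (ereal_inf [set (dist nrm a b)%:E | a in X @` C] <= T%:E)%E.
Proof.
move=> [c0 Cc0] C_closed b Ab; case: (A_attr) => _ [A_cpt _].
have [M M_bnd] := compact_nrm_bounded nrmP A_cpt.
apply: (ereal_inf_le_geometric (K := Num.max 0 (nrm (X c0) + M - T)) (L := L)).
  by rewrite lam_max_ge0 lam_max_lt1.
move=> j; have [s [a [<- Aa <-]]] := attractor_run_decomp j Ab.
exists (X (run Wr c0 s)).
  by exists (run Wr c0 s) => //; exact: run_stable C_closed s c0 Cc0.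
apply: le_trans (dist_le_excess _ _) _; rewrite lerD2l.
apply: le_trans (excess_run s c0 a) _.
rewrite ler_wpM2l ?exprn_ge0 ?lam_max_ge0 // le_max2 // lerD2r.
by apply: le_trans (nrmD nrmP _ _) _; rewrite lerD2l (nrmN nrmP) M_bnd.
Qed.

End RoundedIFS.

Theorem theorem14 (R : realType) (n : nat) (delta : R) (nrm : 'rV[R]_n -> R)
  (N : nat) (w : 'I_N -> 'rV[R]_n -> 'rV[R]_n) (lam : 'I_N -> R)
  (q : 'I_N -> R) (p : 'I_N -> 'rV[int]_n -> R)
  (Ainf : set 'rV[R]_n) (C : set 'rV[int]_n) :
  0 < delta ->
  is_norm nrm ->
  (forall i, ifs_contraction nrm (w i) (lam i)) ->
  (forall i, 0 < q i <= 1) -> \sum_(i < N) q i = 1 ->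
  is_attractor w Ainf ->
  (forall i m, 0 < p i m <= 1) -> (forall m, \sum_(i < N) p i m = 1) ->
  pos_recurrent_class (roundoff_map delta \o w) p C ->
  (hausdorff nrm (latpt delta @` C) Ainf <=
    (theta nrm delta * (1 - \big[Num.max/0]_(i < N) lam i)^-1)%:E)%E.
Proof.
move=> delta_gt0 nrmP w_contr _ _ A_attr p_bnd p_sum1 [C_class C_pos].
have p_gt0 i m : 0 < p i m by case/andP: (p_bnd i m).
have C_rec m : C m -> recurrent (roundoff_map delta \o w) p m by case/C_pos.
have [C_ne [C_comm _]] := C_class.
rewrite /hausdorff ge_max; apply/andP; split; apply: ge_ereal_sup.
- move=> _ [_ [y Cy <-] <-].
  have [s s_gt0 y_cycle] := (accessibleP _ p_gt0 y y).1 (C_comm y y Cy Cy).1.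
  exact: inf_dist_cycle_le y_cycle.
- move=> _ [b Ab <-].
  apply: (inf_dist_closed_le nrmP delta_gt0 w_contr A_attr C_ne _ Ab).
  exact: (communication_class_closed p_gt0 p_sum1 C_class C_rec).
Qed.
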